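(* Let $\phi,\psi$ be Drinfeld modules over $K$ with $n=\operatorname{rk}\phi>\operatorname{rk}\psi$. Identify $\operatorname{Ext}^1_\tau(\phi,\psi)$ with $K^n$ via $(c_0,\dots,c_{n-1})\mapsto$ the class of the biderivation $\delta$ with $\delta(t)=\sum_{i=0}^{n-1}c_i\tau^i$ (this is a bijection). Then $\operatorname{Ext}^1_\tau(\phi,\psi)$ has a natural structure of a $\mathbf t$-module: there is a $\mathbf t$-module $\Pi:\mathbb F_q[t]\to\mathrm{Mat}_n(K\{\tau\})$ such that for every $c\in K^n$, multiplication by $t$ on $\operatorname{Ext}^1_\tau(\phi,\psi)$ sends the class corresponding to $c$ to the class corresponding to $\Pi_t(c)$ (evaluation, $\tau$ acting coordinatewise as $x\mapsto x^q$), and $\Pi_t$ has the block form $$\Pi_t=\begin{bmatrix}\theta&0&\cdots&0\\ \delta_1&&&\\ \vdots&&\Pi^0_t&\\ \delta_{n-1}&&&\end{bmatrix}$$ with $\delta_1,\dots,\delta_{n-1}\in K\{\tau\}$ and $\Pi^0_t\in\mathrm{Mat}_{n-1}(K\{\tau\})$.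
   Context: $A=\mathbb F_q[t]$, $K$ a field of characteristic $p$ with an $\mathbb F_q$-algebra map $\iota:A\to K$, $\theta=\iota(t)$; $K\{\tau\}$ is the ring of twisted polynomials with $\tau x=x^q\tau$. A $\mathbf t$-module of dimension $d$ is an $\mathbb F_q$-algebra homomorphism $\Phi:\mathbb F_q[t]\to\mathrm{Mat}_d(K\{\tau\})$ with $\Phi_t=(\theta I_d+N)+\sum_{i\ge1}M_i\tau^i$, $N$ nilpotent, $M_i\in\mathrm{Mat}_d(K)$; rank $=\deg_\tau\Phi_t$. A Drinfeld module is a $\mathbf t$-module of dimension 1. $\mathrm{Der}(\phi,\psi)$ is the space of $\mathbb F_q$-linear $\delta:\mathbb F_q[t]\to K\{\tau\}$ with $\delta(ab)=\psi_a\delta(b)+\delta(a)\phi_b$ (determined by $\delta(t)$, which can be arbitrary); inner biderivations are $\delta^{(U)}(a)=U\phi_a-\psi_aU$, $U\in K\{\tau\}$. $\operatorname{Ext}^1_\tau(\phi,\psi)$ is identified with $\mathrm{Der}(\phi,\psi)/\mathrm{Der}_{in}(\phi,\psi)$ with $\mathbb F_q[t]$-module structure $a*[\delta]=[\psi_a\delta]$. *)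

From HB Require Import structures.
From mathcomp Require Import all_boot all_order all_algebra all_field.
Set Implicit Arguments. Unset Strict Implicit. Unset Printing Implicit Defensive.
Import GRing.Theory.
Local Open Scope ring_scope.

(* Twisted polynomials K{tau}: an element sum_i a_i tau^i is stored as the
   polynomial a : {poly K} whose i-th coefficient a`_i is the coefficient of
   tau^i.  Only the additive structure of {poly K} is used; multiplication in
   K{tau} (with tau x = x^q tau) is [tmul q]. *)

Section Twisted.
Variable K : fieldType.
Variable q : nat.

(* (sum a_i tau^i)(sum b_j tau^j) = sum_k (sum_{i<=k} a_i b_{k-i}^(q^i)) tau^k *)
Definition tmul (a b : {poly K}) : {poly K} :=
  \poly_(k < (size a + size b).-1)
     \sum_(i < k.+1) a`_i * (b`_(k - i)) ^+ (q ^ i).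

Definition teval (a : {poly K}) (x : K) : K :=
  \sum_(i < size a) a`_i * x ^+ (q ^ i).

Definition tdeg (a : {poly K}) : nat := (size a).-1.

(* A Drinfeld module (t-module of dimension 1) phi is given by phi_t in K{tau};
   the condition is phi_t = (theta + N) + sum_{i>=1} m_i tau^i with N a
   nilpotent 1x1 matrix over the field K, i.e. N = 0. *)
Definition is_drinfeld (theta : K) (phi_t : {poly K}) : Prop :=
  exists N : K, (exists k, N ^+ k = 0) /\ phi_t`_0 = theta + N.

Definition is_tmodule (d : nat) (theta : K) (Phi_t : 'M[{poly K}]_d) : Prop :=
  exists2 N : 'M[K]_d, (exists k, N ^+ k = 0) &
    (\matrix_(i, j) (Phi_t i j)`_0) = theta%:M + N.

Definition tmx_eval (d : nat) (P : 'M[{poly K}]_d) (c : 'cV[K]_d) : 'cV[K]_d :=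
  \col_i \sum_j teval (P i j) (c j 0).

Definition vec_tpoly (n : nat) (c : 'cV[K]_n) : {poly K} :=
  \sum_(i < n) c i 0 *: 'X^i.

(* Biderivations delta in Der(phi,psi) are identified with delta(t) in K{tau}.
   D = delta(t) is (the value at t of) an inner biderivation iff
   D = U phi_t - psi_t U for some U in K{tau}. *)
Definition inner_bider (phi_t psi_t D : {poly K}) : Prop :=
  exists U : {poly K}, D = tmul U phi_t - tmul psi_t U.

End Twisted.

(* Write n for the tau-degree of phi_t.  Since deg psi_t < n, the value
   delta^(U)(t) = U phi_t - psi_t U of an inner biderivation has degree exactly
   deg U + n, so no nonzero one has degree < n: this is uniqueness.  Subtracting
   delta^(z tau^m)(t) with a suitable z kills the leading term of any D of
   degree m + n, and iterating gives existence.  The same reduction writes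
   y tau^(m+n), modulo inner biderivations, as sum_{k < m+n} R_k(y) tau^k with
   twisted polynomials R_k acting on y; by induction on the degree, every
   c |-> psi_t (sum_i c_i tau^i) is thus represented by a matrix of twisted
   polynomials, whose constant term is theta I.  Its first row may be replaced
   by (theta, 0, ..., 0), since inner biderivations have no constant term. *)

From HB Require Import structures.
From mathcomp Require Import all_boot all_order all_algebra all_field.
From mathcomp Require Import zify ring.
Import GRing.Theory.
Local Open Scope ring_scope.

Lemma poly_expand {R : nzSemiRingType} [p : {poly R}] [N : nat] :
  (size p <= N)%N -> p = \sum_(i < N) p`_i *: 'X^i.
Proof.
move=> le_pN; rewrite -poly_def; apply/polyP => i; rewrite coef_poly.
by case: ltnP => // le_Ni; rewrite nth_default // (leq_trans le_pN).
Qed.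

Lemma size_vec_tpoly (K : fieldType) n (c : 'cV[K]_n) : (size (vec_tpoly c) <= n)%N.
Proof.
apply/leq_sizeP => k le_nk; rewrite coef_sum big1 // => i _.
by rewrite coefZ coefXn gtn_eqF ?mulr0 // (leq_trans (ltn_ord i)).
Qed.

Lemma coef_vec_tpoly (K : fieldType) n (c : 'cV[K]_n) (i : 'I_n) :
  (vec_tpoly c)`_i = c i 0.
Proof.
rewrite coef_sum (bigD1 i) //= coefZ coefXn eqxx mulr1 big1 ?addr0 // => j.
by rewrite -val_eqE eq_sym coefZ coefXn => /negbTE ->; rewrite mulr0.
Qed.

Lemma vec_tpoly_coefs (K : fieldType) n (D : {poly K}) :
  (size D <= n)%N -> vec_tpoly (\col_(i < n) D`_i) = D.
Proof.
by move=> le_Dn; rewrite [RHS](poly_expand le_Dn); apply: eq_bigr => i _; rewrite mxE.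
Qed.

Lemma vec_tpoly_sum (K : fieldType) n I r (P : pred I) (f : I -> 'I_n -> K) :
  vec_tpoly (\col_l \sum_(i <- r | P i) f i l)
  = \sum_(i <- r | P i) vec_tpoly (\col_l f i l).
Proof.
rewrite /vec_tpoly exchange_big; apply: eq_bigr => l _.
by rewrite mxE scaler_suml; apply: eq_bigr => i _; rewrite mxE.
Qed.

(* Sizes of polynomials arise at several convertible but syntactically distinct
   types, which lia would treat as unrelated atoms. *)
Ltac size_lia :=
  repeat match goal with H : is_true _ |- _ => revert H end;
  repeat match goal with |- context [size (polyseq ?p)] =>
    let n := fresh "n" in set n := size (polyseq p); clearbody n
  end;
  intros; lia.

Section TwistedPolynomials.
Variables (K : fieldType) (q : nat).
Hypothesis q_pchar : [pchar K].-nat q.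
Implicit Types (a b : {poly K}) (u v x y z : K).

Lemma pchar_natX i : [pchar K].-nat (q ^ i)%N.
Proof. by rewrite pnatX q_pchar. Qed.

Lemma frobD i (x y : K) : (x + y) ^+ (q ^ i) = x ^+ (q ^ i) + y ^+ (q ^ i).
Proof. exact: exprDn_pchar (pchar_natX i). Qed.

Lemma frobN i (x : K) : (- x) ^+ (q ^ i) = - x ^+ (q ^ i).
Proof. exact: exprNn_pchar (pchar_natX i). Qed.

Lemma frob0 i : (0 : K) ^+ (q ^ i) = 0.
Proof. by rewrite expr0n; case/andP: (pchar_natX i); rewrite lt0n => /negbTE ->. Qed.

Lemma frob_sum i I r (P : pred I) (F : I -> K) :
  (\sum_(j <- r | P j) F j) ^+ (q ^ i) = \sum_(j <- r | P j) F j ^+ (q ^ i).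
Proof. exact: (big_morph _ (frobD i) (frob0 i)). Qed.

Lemma coef_tmul a b k :
  (tmul q a b)`_k = \sum_(i < k.+1) a`_i * b`_(k - i) ^+ (q ^ i).
Proof.
rewrite coef_poly; case: ltnP => // le_k; symmetry; apply: big1 => i _.
have [lt_ia | le_ai] := ltnP i (size a); last by rewrite nth_default ?mul0r.
by rewrite [b`__]nth_default ?frob0 ?mulr0 //; size_lia.
Qed.

Lemma size_tmul_leq a b : (size (tmul q a b) <= (size a + size b).-1)%N.
Proof. exact: size_poly. Qed.

Lemma coef_tmul_top a b :
  (tmul q a b)`_((size a).-1 + (size b).-1) =
    lead_coef a * lead_coef b ^+ (q ^ (size a).-1).
Proof.
rewrite coef_tmul (bigD1 (Ordinal (leq_addr _ _ : (size a).-1 < _.+1)%N)) //=.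
rewrite addKn big1 ?addr0 // => -[i i_lt]; rewrite -val_eqE /= => ne_i.
have [lt_i | gt_i] := ltnP i (size a).-1.
  by rewrite [b`__]nth_default ?frob0 ?mulr0 //; size_lia.
by rewrite nth_default ?mul0r //; size_lia.
Qed.

Lemma tmul_coef0 a b : (tmul q a b)`_0 = a`_0 * b`_0.
Proof. by rewrite coef_tmul big_ord1 expn0 expr1. Qed.

Lemma tmulDl a1 a2 b : tmul q (a1 + a2) b = tmul q a1 b + tmul q a2 b.
Proof.
apply/polyP => k; rewrite coefD !coef_tmul -big_split.
by apply: eq_bigr => i _; rewrite coefD mulrDl.
Qed.

Lemma tmulDr a b1 b2 : tmul q a (b1 + b2) = tmul q a b1 + tmul q a b2.
Proof.
apply/polyP => k; rewrite coefD !coef_tmul -big_split.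
by apply: eq_bigr => i _; rewrite coefD frobD mulrDr.
Qed.

Lemma tmulNl a b : tmul q (- a) b = - tmul q a b.
Proof.
apply/polyP => k; rewrite coefN !coef_tmul -sumrN.
by apply: eq_bigr => i _; rewrite coefN mulNr.
Qed.

Lemma tmulNr a b : tmul q a (- b) = - tmul q a b.
Proof.
apply/polyP => k; rewrite coefN !coef_tmul -sumrN.
by apply: eq_bigr => i _; rewrite coefN frobN mulrN.
Qed.

Lemma tmul0l b : tmul q 0 b = 0.
Proof. by apply/polyP => k; rewrite coef_tmul coef0 big1 // => i _; rewrite coef0 mul0r. Qed.

Lemma tmul0r a : tmul q a 0 = 0.
Proof.
by apply/polyP => k; rewrite coef_tmul coef0 big1 // => i _; rewrite coef0 frob0 mulr0.
Qed.

Lemma tmul_suml I r (P : pred I) (F : I -> {poly K}) b :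
  tmul q (\sum_(i <- r | P i) F i) b = \sum_(i <- r | P i) tmul q (F i) b.
Proof. exact: (big_morph (tmul q ^~ b) (fun a1 a2 => tmulDl a1 a2 b) (tmul0l b)). Qed.

Lemma tmul_sumr a I r (P : pred I) (F : I -> {poly K}) :
  tmul q a (\sum_(i <- r | P i) F i) = \sum_(i <- r | P i) tmul q a (F i).
Proof. exact: (big_morph (tmul q a) (tmulDr a) (tmul0r a)). Qed.

Lemma tmul_scaleXn u i v j :
  tmul q (u *: 'X^i) (v *: 'X^j) = (u * v ^+ (q ^ i)) *: 'X^(i + j).
Proof.
apply/polyP => k; rewrite coef_tmul coefZ coefXn.
have [-> | ne_k] := eqVneq k (i + j).
  rewrite (bigD1 (Ordinal (leq_addr j i : i < (i + j).+1)%N)) //= addKn.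
  rewrite !coefZ !coefXn !eqxx !mulr1 big1 ?addr0 // => l; rewrite -val_eqE /= => ne_l.
  by rewrite coefZ coefXn (negbTE ne_l) mulr0 mul0r.
rewrite mulr0; apply: big1 => -[l lt_l] _ /=; rewrite !coefZ !coefXn.
have [eq_l | _] := eqVneq l i; last by rewrite mulr0 mul0r.
have /negbTE -> : (k - l != j)%N by lia.
by rewrite mulr0 frob0 mulr0.
Qed.

Lemma tmul_scaleXn_l N z m b : (size b <= N)%N ->
  tmul q (z *: 'X^m) b = \sum_(j < N) (z * b`_j ^+ (q ^ m)) *: 'X^(m + j).
Proof.
move=> le_bN; rewrite {1}(poly_expand le_bN) tmul_sumr.
by apply: eq_bigr => j _; exact: tmul_scaleXn.
Qed.

Lemma tmul_scaleXn_r N a z m : (size a <= N)%N ->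
  tmul q a (z *: 'X^m) = \sum_(j < N) (a`_j * z ^+ (q ^ j)) *: 'X^(j + m).
Proof.
move=> le_aN; rewrite {1}(poly_expand le_aN) tmul_suml.
by apply: eq_bigr => j _; exact: tmul_scaleXn.
Qed.

Lemma teval_widen N a x : (size a <= N)%N ->
  teval q a x = \sum_(i < N) a`_i * x ^+ (q ^ i).
Proof.
move=> le_aN; rewrite /teval (big_ord_widen N (fun i => a`_i * x ^+ (q ^ i)) le_aN).
rewrite big_mkcond; apply: eq_bigr => i _; case: ltnP => // le_ai.
by rewrite nth_default ?mul0r.
Qed.

Lemma tevalD a1 a2 x : teval q (a1 + a2) x = teval q a1 x + teval q a2 x.
Proof.
pose N := maxn (size a1) (size a2).
rewrite !(teval_widen N) ?leq_maxl ?leq_maxr ?size_polyD //.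
by rewrite -big_split; apply: eq_bigr => i _; rewrite coefD mulrDl.
Qed.

Lemma teval0 x : teval q 0 x = 0.
Proof. by rewrite /teval size_poly0 big_ord0. Qed.

Lemma tevalN a x : teval q (- a) x = - teval q a x.
Proof.
by rewrite /teval size_polyN -sumrN; apply: eq_bigr => i _; rewrite coefN mulNr.
Qed.

Lemma tevalB a1 a2 x : teval q (a1 - a2) x = teval q a1 x - teval q a2 x.
Proof. by rewrite tevalD tevalN. Qed.

Lemma teval_sum x I r (P : pred I) (F : I -> {poly K}) :
  teval q (\sum_(i <- r | P i) F i) x = \sum_(i <- r | P i) teval q (F i) x.
Proof. exact: (big_morph (teval q ^~ x) (fun a1 a2 => tevalD a1 a2 x) (teval0 x)). Qed.

Lemma teval_scaleXn c j x : teval q (c *: 'X^j) x = c * x ^+ (q ^ j).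
Proof.
rewrite (teval_widen j.+1) ?(leq_trans (size_scale_leq _ _)) ?size_polyXn //.
rewrite big_ord_recr /=.
rewrite coefZ coefXn eqxx mulr1 big1 ?add0r // => i _.
by rewrite coefZ coefXn (ltn_eqF (ltn_ord i)) mulr0 mul0r.
Qed.

Lemma tevalC c x : teval q c%:P x = c * x.
Proof. by rewrite -alg_polyC -(expr0 'X) teval_scaleXn expn0 expr1. Qed.

Lemma teval_tmul a b x : teval q (tmul q a b) x = teval q a (teval q b x).
Proof.
rewrite {1}(poly_expand (leqnn (size a))) tmul_suml teval_sum [RHS]/teval.
apply: eq_bigr => i _; rewrite (tmul_scaleXn_l (size b)) // teval_sum.
rewrite [teval q b x]/teval frob_sum mulr_sumr; apply: eq_bigr => j _.
by rewrite teval_scaleXn exprMn -exprM -expnD addnC mulrA.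
Qed.

Section Ext.
Variables (theta : K) (phi psi : {poly K}) (n : nat).
Hypotheses (phi0 : phi`_0 = theta) (psi0 : psi`_0 = theta).
Hypotheses (size_phi : size phi = n.+1) (size_psi : (size psi <= n)%N).
Implicit Types (U D : {poly K}).

Local Notation inner := (inner_bider q phi psi).
Local Notation vec := (@vec_tpoly K n).
Local Notation delta U := (tmul q U phi - tmul q psi U).

Lemma inner_delta U : inner (delta U).
Proof. by exists U. Qed.

Lemma inner0 : inner 0.
Proof. by exists 0; rewrite tmul0l tmul0r subrr. Qed.

Lemma innerD [D1 D2] : inner D1 -> inner D2 -> inner (D1 + D2).
Proof.
move=> [U ->] [V ->]; exists (U + V).
by rewrite tmulDl tmulDr opprD addrACA.
Qed.

Lemma innerN [D] : inner D -> inner (- D).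
Proof. by move=> [U ->]; exists (- U); rewrite tmulNl tmulNr opprB opprK addrC. Qed.

Lemma inner_sum I r (P : pred I) (F : I -> {poly K}) :
  (forall i, P i -> inner (F i)) -> inner (\sum_(i <- r | P i) F i).
Proof. by move=> innerF; apply: big_ind => //; [exact: inner0 | exact: innerD]. Qed.

Lemma inner_coef0 [D] : inner D -> D`_0 = 0.
Proof. by move=> [U ->]; rewrite coefB !tmul_coef0 phi0 psi0 mulrC subrr. Qed.

Lemma phi_lead_neq0 : phi`_n != 0.
Proof.
by have := lead_coef_eq0 phi; rewrite /lead_coef size_phi -size_poly_eq0 size_phi => ->.
Qed.

Lemma size_delta_gt [U] : U != 0 -> (n < size (delta U))%N.
Proof.
move=> nz_U; set m := (size U).-1.
have top : (delta U)`_(m + n) = lead_coef U * phi`_n ^+ (q ^ m).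
  have -> : n = (size phi).-1 by rewrite size_phi.
  rewrite coefB coef_tmul_top [X in _ - X]nth_default ?subr0 //.
  apply: leq_trans (size_tmul_leq _ _) _.
  by rewrite size_phi /m; move: (size_poly_gt0 U); rewrite nz_U; size_lia.
rewrite ltnNge; apply/negP => /leq_sizeP/(_ (m + n) (leq_addl _ _))/eqP.
by rewrite top mulf_eq0 lead_coef_eq0 (negbTE nz_U) expf_eq0 (negbTE phi_lead_neq0) andbF.
Qed.

Lemma delta_scaleXn z m :
  delta (z *: 'X^m) = (z * phi`_n ^+ (q ^ m)) *: 'X^(m + n)
    - \sum_(j < n) teval q (psi`_j *: 'X^j - (phi`_j ^+ (q ^ m))%:P) z *: 'X^(m + j).
Proof.
rewrite (tmul_scaleXn_l n.+1) ?size_phi // big_ord_recr /= (tmul_scaleXn_r n) //.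
have -> : \sum_(j < n) (psi`_j * z ^+ (q ^ j)) *: 'X^(j + m)
          = \sum_(j < n) (psi`_j * z ^+ (q ^ j)) *: 'X^(m + j).
  by apply: eq_bigr => j _; rewrite addnC.
have -> : \sum_(j < n) teval q (psi`_j *: 'X^j - (phi`_j ^+ (q ^ m))%:P) z *: 'X^(m + j)
          = \sum_(j < n) (psi`_j * z ^+ (q ^ j)) *: 'X^(m + j)
            - \sum_(j < n) (z * phi`_j ^+ (q ^ m)) *: 'X^(m + j).
  rewrite -sumrB; apply: eq_bigr => j _.
  by rewrite tevalB teval_scaleXn tevalC scalerBl [_ * z]mulrC.
ring.
Qed.

(* By delta_scaleXn with z = y / phi_n^(q^m), y tau^(m+n) is congruent to
   sum_k (reduce_coef m k)(y) tau^k. *)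
Definition reduce_coef m k : {poly K} :=
  if (m <= k)%N then
    tmul q (psi`_(k - m) *: 'X^(k - m) - (phi`_(k - m) ^+ (q ^ m))%:P)
      (phi`_n ^+ (q ^ m))^-1%:P
  else 0.

Lemma inner_reduce m y :
  inner (y *: 'X^(m + n) - \sum_(k < m + n) teval q (reduce_coef m k) y *: 'X^k).
Proof.
set z := (phi`_n ^+ (q ^ m))^-1 * y.
suff -> : y *: 'X^(m + n) - \sum_(k < m + n) teval q (reduce_coef m k) y *: 'X^k
          = delta (z *: 'X^m) by exact: inner_delta.
rewrite delta_scaleXn /z mulrAC mulVf ?expf_neq0 ?phi_lead_neq0 // mul1r.
rewrite big_split_ord /= big1 ?add0r => [|i _]; last first.
  by rewrite /reduce_coef leqNgt ltn_ord teval0 scale0r.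
congr (_ - _); apply: eq_bigr => j _.
by rewrite /reduce_coef leq_addr addKn teval_tmul tevalC.
Qed.

Lemma exists_vec_inner D : exists c : 'cV[K]_n, inner (D - vec c).
Proof.
have [N] := ubnP (size D); elim: N D => // N IH D /ltnSE le_DN.
have [le_Dn | lt_nD] := leqP (size D) n.
  by exists (\col_i D`_i); rewrite vec_tpoly_coefs // subrr; exact: inner0.
set d := (size D).-1; set m := (d - n)%N.
have d_eq : d = (m + n)%N by rewrite /m subnK // /d; size_lia.
pose D' := \sum_(k < d) (D`_k + teval q (reduce_coef m k) D`_d) *: 'X^k.
have /IH [c inner_c] : (size D' < N)%N.
  rewrite /D' -(poly_def d (fun k => D`_k + teval q (reduce_coef m k) D`_d)).
  by rewrite (leq_ltn_trans (size_poly _ _)) // (leq_trans _ le_DN) // /d; size_lia.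
have D'E : D' = \sum_(k < d) D`_k *: 'X^k
               + \sum_(k < d) teval q (reduce_coef m k) D`_d *: 'X^k.
  by rewrite /D' -big_split; apply: eq_bigr => k _; rewrite scalerDl.
exists c.
have -> : D - vec c = (D' - vec c)
    + (D`_d *: 'X^(m + n) - \sum_(k < m + n) teval q (reduce_coef m k) D`_d *: 'X^k).
  rewrite -d_eq {1}(poly_expand (_ : size D <= d.+1)%N); last by rewrite /d; size_lia.
  by rewrite big_ord_recr D'E /=; ring.
by apply: innerD => //; exact: inner_reduce.
Qed.

Lemma vec_inner_inj c1 c2 : inner (vec c1 - vec c2) -> c1 = c2.
Proof.
move=> [U eqU]; have [U0 | nz_U] := eqVneq U 0.
  apply/matrixP => i j; rewrite [j]ord1; apply/eqP; rewrite -subr_eq0.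
  rewrite -[c1 i 0]coef_vec_tpoly -[c2 i 0]coef_vec_tpoly -coefB eqU U0.
  by rewrite tmul0l tmul0r subrr coef0.
have := size_delta_gt nz_U; rewrite -eqU ltnNge (leq_trans (size_polyD _ _)) //.
by rewrite geq_max size_polyN !size_vec_tpoly.
Qed.

Lemma ext_bijective D : exists! c : 'cV[K]_n, inner (D - vec c).
Proof.
have [c inner_c] := exists_vec_inner D; exists c; split => // c' inner_c'.
apply: vec_inner_inj; have -> : vec c - vec c' = (D - vec c') - (D - vec c) by ring.
exact: innerD inner_c' (innerN inner_c).
Qed.

Definition represents (Q : 'I_n -> {poly K}) (f : K -> {poly K}) :=
  forall x, inner (f x - vec (\col_l teval q (Q l) x)).

Lemma represents_twisted_linear d (R : nat -> {poly K}) :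
  (forall k, (n <= k)%N -> (R k)`_0 = 0) ->
  exists2 Q, represents Q (fun x => \sum_(k < d + n) teval q (R k) x *: 'X^k)
           & forall l : 'I_n, (Q l)`_0 = (R l)`_0.
Proof.
elim: d R => [|d IH] R R0.
  exists (fun l => R l) => // x.
  have -> : vec (\col_l teval q (R l) x) = \sum_(k < n) teval q (R k) x *: 'X^k.
    by apply: eq_bigr => l _; rewrite mxE.
  by rewrite add0n subrr; exact: inner0.
pose R' k := R k + tmul q (reduce_coef d k) (R (d + n)%N).
have R'0 k : (R' k)`_0 = (R k)`_0.
  by rewrite coefD tmul_coef0 (R0 (d + n)%N) ?leq_addl // mulr0 addr0.
have [|Q repQ Q0] := IH R'; first by move=> k le_nk; rewrite R'0 R0.
exists Q => [x | l]; last by rewrite Q0 R'0.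
have sumR' : \sum_(k < d + n) teval q (R' k) x *: 'X^k
    = \sum_(k < d + n) teval q (R k) x *: 'X^k
      + \sum_(k < d + n) teval q (reduce_coef d k) (teval q (R (d + n)%N) x) *: 'X^k.
  by rewrite -big_split; apply: eq_bigr => k _; rewrite /R' tevalD teval_tmul scalerDl.
have -> : \sum_(k < d.+1 + n) teval q (R k) x *: 'X^k
    = \sum_(k < d + n) teval q (R' k) x *: 'X^k
      + (teval q (R (d + n)%N) x *: 'X^(d + n)
         - \sum_(k < d + n) teval q (reduce_coef d k) (teval q (R (d + n)%N) x) *: 'X^k).
  by rewrite addSn big_ord_recr sumR' /=; ring.
by rewrite addrAC; exact: innerD (repQ x) (inner_reduce d _).
Qed.

Lemma represents_psi_scaleXn (i : 'I_n) :
  exists2 Q, represents Q (fun x => tmul q psi (x *: 'X^i))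
           & forall l : 'I_n, (Q l)`_0 = theta *+ (l == i).
Proof.
pose R k := if (i <= k)%N then psi`_(k - i) *: 'X^(k - i) else 0.
have [|Q repQ Q0] := represents_twisted_linear i R.
  move=> k le_nk; have lt_ik := leq_trans (ltn_ord i) le_nk.
  by rewrite /R (ltnW lt_ik) coefZ coefXn eq_sym subn_eq0 (ltn_geF lt_ik) mulr0.
exists Q => [x | l].
  suff -> : tmul q psi (x *: 'X^i) = \sum_(k < i + n) teval q (R k) x *: 'X^k by exact: repQ.
  rewrite (tmul_scaleXn_r n) // big_split_ord /=.
  rewrite [X in _ = X + _]big1 ?add0r => [|k _]; last first.
    by rewrite /R leqNgt ltn_ord teval0 scale0r.
  by apply: eq_bigr => j _; rewrite /R leq_addr addKn teval_scaleXn addnC.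
rewrite Q0 /R; have [-> | ne_li] := eqVneq l i.
  by rewrite leqnn subnn coefZ coefXn eqxx psi0 mulr1.
case: ifP => [le_il | _]; last by rewrite coef0.
have lt_il : (i < l)%N by rewrite ltn_neqAle le_il andbT eq_sym val_eqE.
by rewrite coefZ coefXn eq_sym subn_eq0 (ltn_geF lt_il) mulr0.
Qed.

Lemma exists_psi_matrix : exists2 Pi0 : 'M[{poly K}]_n,
  forall c, inner (tmul q psi (vec c) - vec (tmx_eval q Pi0 c))
  & forall l i, (Pi0 l i)`_0 = theta *+ (l == i).
Proof.
have [Q repQ Q0] := fin_all_exists2 represents_psi_scaleXn.
exists (\matrix_(l, i) Q i l) => [c | l i]; last by rewrite mxE Q0.
have -> : tmx_eval q (\matrix_(l, i) Q i l) c = \col_l \sum_i teval q (Q i l) (c i 0).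
  by apply/matrixP => l j; rewrite !mxE; apply: eq_bigr => i _; rewrite mxE.
rewrite {1}/vec_tpoly tmul_sumr vec_tpoly_sum -sumrB.
by apply: inner_sum => i _; exact: repQ.
Qed.

Lemma ext_tmodule : exists Pi_t : 'M[{poly K}]_n,
  is_tmodule theta Pi_t /\
  (forall c, inner (tmul q psi (vec c) - vec (tmx_eval q Pi_t c))) /\
  (forall i j : 'I_n, nat_of_ord i = 0%N ->
     Pi_t i j = (if nat_of_ord j == 0%N then theta%:P else 0)).
Proof.
have [Pi0 repPi0 Pi0_coef0] := exists_psi_matrix.
pose Pi := \matrix_(l, i)
  if nat_of_ord l == 0%N then (if nat_of_ord i == 0%N then theta%:P else 0) else Pi0 l i.
(* The constant term of the congruence for Pi0 gives row 0 of Pi0 c = theta c_0. *)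
have evalPi c : tmx_eval q Pi c = tmx_eval q Pi0 c.
  apply/matrixP => l j; rewrite [j]ord1 !mxE.
  have [l0 | nz_l] := eqVneq (nat_of_ord l) 0%N; last first.
    by apply: eq_bigr => i _; rewrite mxE (negbTE nz_l).
  rewrite (bigD1 l) //= mxE l0 eqxx tevalC big1 ?addr0 => [|i ne_il]; last first.
    rewrite mxE l0 eqxx; have /negbTE -> : nat_of_ord i != 0%N by rewrite -l0 val_eqE.
    exact: teval0.
  have vec0 (v : 'cV[K]_n) : (vec v)`_0 = v l 0 by rewrite -coef_vec_tpoly l0.
  have /eqP := inner_coef0 (repPi0 c).
  by rewrite coefB tmul_coef0 psi0 !vec0 subr_eq0 mxE => /eqP.
exists Pi; split; [|split].
- exists 0; first by exists 1%N; rewrite expr1.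
  apply/matrixP => l i; rewrite addr0 !mxE.
  have [l0 | nz_l] := eqVneq (nat_of_ord l) 0%N; last exact: Pi0_coef0.
  rewrite -val_eqE /= l0; case: eqP => [-> | /eqP nz_i]; first by rewrite coefC.
  by rewrite coef0 eq_sym (negbTE nz_i).
- by move=> c; rewrite evalPi; exact: repPi0.
- by move=> i j i0; rewrite mxE i0.
Qed.

End Ext.

End TwistedPolynomials.

Lemma is_drinfeld_coef0 (K : fieldType) (theta : K) (phi : {poly K}) :
  is_drinfeld theta phi -> phi`_0 = theta.
Proof. by move=> [N [[k /eqP]]]; rewrite expf_eq0 => /andP[_ /eqP ->]; rewrite addr0. Qed.

Lemma card_pchar_nat {Fq : finFieldType} {K : fieldType} (f : {rmorphism Fq -> K}) :
  [pchar K].-nat #|Fq|.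
Proof.
have [p p_prime pFq] := finPcharP Fq.
rewrite (eq_pnat _ (pcharf_eq (rmorph_pchar f pFq))) (card_pprimeChar pFq).
by rewrite pnatX pnat_id.
Qed.

Theorem proposition5p1
  (Fq : finFieldType) (K : fieldType) (iota0 : {rmorphism Fq -> K})
  (theta : K) (phi_t psi_t : {poly K}) :
  is_drinfeld theta phi_t -> is_drinfeld theta psi_t ->
  (tdeg psi_t < tdeg phi_t)%N ->
  (* the identification K^n -> Ext^1(phi,psi) is a bijection *)
  (forall D : {poly K}, exists! c : 'cV[K]_(tdeg phi_t),
      inner_bider #|Fq| phi_t psi_t (D - vec_tpoly c)) /\
  (* Ext^1 carries a t-module structure Pi with the required block form *)
  (exists Pi_t : 'M[{poly K}]_(tdeg phi_t),
      is_tmodule theta Pi_t /\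
      (forall c : 'cV[K]_(tdeg phi_t),
         inner_bider #|Fq| phi_t psi_t
           (tmul #|Fq| psi_t (vec_tpoly c)
            - vec_tpoly (tmx_eval #|Fq| Pi_t c))) /\
      (forall i j : 'I_(tdeg phi_t), nat_of_ord i = 0%N ->
         Pi_t i j = (if nat_of_ord j == 0%N then theta%:P else 0))).
Proof.
move=> /is_drinfeld_coef0 phi0 /is_drinfeld_coef0 psi0 lt_deg.
have q_pchar := card_pchar_nat iota0.
have size_phi : size phi_t = (tdeg phi_t).+1 by rewrite /tdeg in lt_deg *; size_lia.
have size_psi : (size psi_t <= tdeg phi_t)%N by rewrite /tdeg in lt_deg *; size_lia.
split; first by move=> D; apply: ext_bijective.
exact: ext_tmodule.
Qed.
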